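(* Let $d\ge 2$. There exists a constant $c\in(0,1)$ depending only on $d$ such that the following holds for every finite field $\mathbb F_q$ of characteristic greater than two. Let $E,F\subset \mathbb F_q^d$ with $(0,\ldots,0)\notin E$. Then $$|\Pi(E,F)|\ \ge\ c\,\min\left\{ q,\ \frac{|E|\,|F|^2}{q^{2d-1}\sum_{x\in \mathbb F_q^{d}\setminus\{0\}} \sum_{s\in\mathbb F_q^*}E(sx)\, |\widehat{F}(x)|^2}\right\},$$ where the second entry of the minimum is interpreted as $+\infty$ if the double sum in its denominator vanishes and $E$ is nonempty.
   Context: $\mathbb F_q$ is a finite field with $q$ elements and characteristic greater than two; $\mathbb F_q^*=\mathbb F_q\setminus\{0\}$. For $E,F\subset\mathbb F_q^d$, $\Pi(E,F)=\{x\cdot y: x\in E,\ y\in F\}\subset\mathbb F_q$, where $x\cdot y=\sum_i x_iy_i$. A set is identified with its indicator function, so $E(z)=1$ if $z\in E$ and $0$ otherwise. Fix a nontrivial additive character $\psi:\mathbb F_q\to\{u\in\mathbb C:|u|=1\}$; for $f:\mathbb F_q^d\to\mathbb C$ the Fourier transform is $\widehat f(m)=q^{-d}\sum_{x\in\mathbb F_q^d} f(x)\psi(-x\cdot m)$. *)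

From HB Require Import structures.
From mathcomp Require Import all_boot all_order all_algebra all_field.
Set Implicit Arguments. Unset Strict Implicit. Unset Printing Implicit Defensive.
Import Order.TTheory GRing.Theory Num.Theory.
Local Open Scope ring_scope.

Definition dotv (K : finFieldType) (d : nat) (x y : 'rV[K]_d) : K :=
  \sum_(i < d) x 0 i * y 0 i.

Definition Pi (K : finFieldType) (d : nat) (E F : {set 'rV[K]_d}) : {set K} :=
  [set dotv x y | x in E, y in F].

Definition is_nontriv_add_char (K : finFieldType) (psi : K -> algC) : Prop :=
  (forall a b, psi (a + b) = psi a * psi b) /\ (forall a, `|psi a| = 1) /\
  (exists a, psi a != 1).

Definition ind (T : finType) (A : {set T}) (x : T) : algC := (x \in A)%:R.

Definition fourier (K : finFieldType) (d : nat) (psi : K -> algC)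
    (f : 'rV[K]_d -> algC) (m : 'rV[K]_d) : algC :=
  (#|K|%:R ^- d) * \sum_(x : 'rV[K]_d) f x * psi (- dotv x m).

Definition lineSum (K : finFieldType) (d : nat) (psi : K -> algC)
    (E F : {set 'rV[K]_d}) : algC :=
  \sum_(x : 'rV[K]_d | x != 0) \sum_(s : K | s != 0)
     ind E (s *: x) * `|fourier psi (ind F) x| ^+ 2.

From HB Require Import structures.
From mathcomp Require Import all_boot all_order all_algebra all_field.
From mathcomp Require Import ring.
Import Order.TTheory GRing.Theory Num.Theory.
Set Implicit Arguments.
Unset Strict Implicit.
Unset Printing Implicit Defensive.
Local Open Scope ring_scope.

(* Let nu(t) count the pairs (x, y) in E x F with x . y = t.  Cauchy-Schwarz on
   the support Pi(E, F) of nu gives (|E||F|)^2 <= |Pi(E, F)| sum_t nu(t)^2, and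
   by orthogonality of characters the energy sum_t nu(t)^2 equals
   q^-1 sum_s |G(s)|^2 with G(s) = sum_{x in E} sum_{y in F} psi(s x . y).
   The term s = 0 gives (|E||F|)^2 / q.  For s <> 0, Cauchy-Schwarz over x
   bounds |G(s)|^2 by |E| q^(2d) sum_{x in E} |Fhat(s x)|^2, and summing over
   s <> 0 recovers the line sum of the statement, because 0 is not in E.
   Comparing the two terms of the resulting bound yields the claim with c = 1/2. *)

Lemma normC_sum_sqr_le (I : finType) (A : {pred I}) (a : I -> algC) :
  `|\sum_(i in A) a i| ^+ 2 <= #|A|%:R * \sum_(i in A) `|a i| ^+ 2.
Proof.
set n : algC := #|A|%:R; set s := \sum_(i in A) a i.
have [A0 | nA_gt0] := eqVneq #|A| 0%N.
  by rewrite /s big_pred0 ?normr0 ?expr0n ?mulr_ge0 ?ler0n ?sumr_ge0 //;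
    [move=> i _; rewrite exprn_ge0 | exact/card0_eq].
have variance : \sum_(i in A) `|n * a i - s| ^+ 2
    = n * (n * \sum_(i in A) `|a i| ^+ 2 - `|s| ^+ 2).
  under eq_bigr => i _ do rewrite normCK rmorphB rmorphM /= conjC_nat.
  have -> : \sum_(i in A) (n * a i - s) * (n * (a i)^* - s^*)
      = \sum_(i in A) (n * n * (a i * (a i)^*)) - s * (n * s^*)
        - (\sum_(i in A) (a i)^*) * (n * s) + \sum_(i in A) (s * s^*).
    rewrite [s * _]mulr_suml [_ * (n * s)]mulr_suml -!sumrB -big_split /=.
    by apply: eq_bigr => i _; ring.
  rewrite -rmorph_sum sumr_const -mulr_sumr.
  under eq_bigr => i _ do rewrite -normCK.
  by rewrite normCK -/n; ring.
have n_gt0 : 0 < n by rewrite ltr0n lt0n.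
have : 0 <= n * (n * \sum_(i in A) `|a i| ^+ 2 - `|s| ^+ 2).
  by rewrite -variance sumr_ge0 // => i _; rewrite exprn_ge0.
by rewrite pmulr_rge0 // subr_ge0.
Qed.

Lemma normC_sum_sqr_le_supp (I : finType) (A : {pred I}) (a : I -> algC) :
  (forall i, i \notin A -> a i = 0) ->
  `|\sum_i a i| ^+ 2 <= #|A|%:R * \sum_i `|a i| ^+ 2.
Proof.
move=> a_supp; have supp_sum (b : I -> algC) :
    (forall i, i \notin A -> b i = 0) -> \sum_i b i = \sum_(i in A) b i.
  by move=> b_supp; rewrite (bigID [in A]) /= [X in _ + X]big1 ?addr0.
rewrite !supp_sum //; first exact: normC_sum_sqr_le.
by move=> i /a_supp ->; rewrite normr0 expr0n.
Qed.

Lemma dotvC (K : finFieldType) d (x y : 'rV[K]_d) : dotv x y = dotv y x.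
Proof. by apply: eq_bigr => i _; rewrite mulrC. Qed.

Lemma dotvZl (K : finFieldType) d s (x y : 'rV[K]_d) :
  dotv (s *: x) y = s * dotv x y.
Proof. by rewrite /dotv mulr_sumr; apply: eq_bigr => i _; rewrite mxE mulrA. Qed.

Lemma natr_card_gt0 (K : finFieldType) : 0 < (#|K|%:R : algC).
Proof. by rewrite ltr0n; apply/card_gt0P; exists 0. Qed.

Section AdditiveCharacter.
Variables (K : finFieldType) (psi : K -> algC).
Hypothesis psi_char : is_nontriv_add_char psi.

Let card_neq0 : (#|K|%:R : algC) != 0 := lt0r_neq0 (natr_card_gt0 K).

Lemma psiD a b : psi (a + b) = psi a * psi b.
Proof. by case: psi_char. Qed.

Lemma norm_psi a : `|psi a| = 1.
Proof. by case: psi_char => _ []. Qed.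

Lemma psi_neq0 a : psi a != 0.
Proof. by rewrite -normr_eq0 norm_psi oner_eq0. Qed.

Lemma psi0 : psi 0 = 1.
Proof. by apply: (mulfI (psi_neq0 0)); rewrite mulr1 -psiD addr0. Qed.

Lemma psiN a : psi (- a) = (psi a)^*.
Proof.
by apply: (mulfI (psi_neq0 a)); rewrite -psiD subrr psi0 -normCK norm_psi expr1n.
Qed.

Lemma sum_psi : \sum_u psi u = 0.
Proof.
have [a psi_a_neq1] := psi_char.2.2.
have : (psi a - 1) * \sum_u psi u = 0.
  rewrite mulrBl mul1r mulr_sumr [X in _ - X](reindex_inj (addrI a)) /=.
  by rewrite -sumrB big1 // => u _; rewrite psiD subrr.
by move/eqP; rewrite mulf_eq0 subr_eq0 (negPf psi_a_neq1) => /eqP.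
Qed.

Lemma sum_psiM c : \sum_s psi (s * c) = if c == 0 then #|K|%:R else 0.
Proof.
have [-> | c_neq0] := eqVneq c 0.
  by under eq_bigr => s _ do rewrite mulr0 psi0; rewrite sumr_const cardT.
by rewrite -[RHS]sum_psi [RHS](reindex_inj (mulIf c_neq0)).
Qed.

Lemma eq_psi_orth a b :
  ((a == b)%:R : algC) = #|K|%:R^-1 * \sum_s psi (s * a) * (psi (s * b))^*.
Proof.
under eq_bigr => s _ do rewrite -psiN -psiD -mulrN -mulrDr.
by rewrite sum_psiM subr_eq0; case: eqP => _; rewrite ?mulVf ?mulr0.
Qed.

Lemma fourier_indE d (F : {set 'rV[K]_d}) z :
  #|K|%:R ^+ d * (fourier psi (ind F) z)^* = \sum_(y in F) psi (dotv z y).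
Proof.
rewrite /fourier rmorphM fmorphV rmorphXn /= conjC_nat mulVKf ?expf_neq0 //.
rewrite rmorph_sum [RHS]big_mkcond /=; apply: eq_bigr => y _.
by rewrite /ind rmorphM /= conjC_nat -psiN opprK dotvC; case: (y \in F);
  rewrite ?mul1r ?mul0r.
Qed.

End AdditiveCharacter.

Section Energy.
Variables (K : finFieldType) (d : nat) (psi : K -> algC).
Hypothesis psi_char : is_nontriv_add_char psi.
Variables (E F : {set 'rV[K]_d}).

Let q : algC := #|K|%:R.
Let e : algC := #|E|%:R.
Let f : algC := #|F|%:R.
Let EF (p : 'rV[K]_d * 'rV[K]_d) := (p.1 \in E) && (p.2 \in F).
Let nu (t : K) : algC := \sum_(p | EF p) (dotv p.1 p.2 == t)%:R.
Let G (s : K) : algC := \sum_(p | EF p) psi (s * dotv p.1 p.2).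

Let q_gt0 : 0 < q := natr_card_gt0 K.

Let sum_EF1 : \sum_(p | EF p) 1 = e * f.
Proof.
rewrite -(pair_big [in E] [in F] (fun _ _ => 1)) /=.
by under eq_bigr => x _ do rewrite sumr_const; rewrite sumr_const -mulr_natl.
Qed.

Lemma sum_nu : \sum_t nu t = e * f.
Proof.
rewrite exchange_big -sum_EF1; apply: eq_bigr => p _.
rewrite (bigD1 (dotv p.1 p.2)) //= eqxx big1 ?addr0 // => t.
by rewrite eq_sym => /negPf ->.
Qed.

Lemma nu_ge0 t : 0 <= nu t.
Proof. by rewrite sumr_ge0 // => p _; rewrite ler0n. Qed.

Lemma nu_eq0 t : t \notin Pi E F -> nu t = 0.
Proof.
move=> t_notin_Pi; apply: big1 => p /andP [p1E p2F].
by case: eqP => // Dt; case/negP: t_notin_Pi; rewrite -Dt; apply/imset2P; exists p.1 p.2.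
Qed.

Lemma card_Pi_energy : (e * f) ^+ 2 <= #|Pi E F|%:R * \sum_t nu t ^+ 2.
Proof.
rewrite -sum_nu -[X in X ^+ 2]ger0_norm ?sumr_ge0 //; last by move=> t _; apply: nu_ge0.
apply: le_trans (normC_sum_sqr_le_supp nu_eq0) _.
by under eq_bigr => t _ do rewrite (ger0_norm (nu_ge0 t)).
Qed.

Lemma sum_nu_sqr : \sum_t nu t ^+ 2 = q^-1 * \sum_s `|G s| ^+ 2.
Proof.
transitivity (\sum_(p | EF p) \sum_(p' | EF p')
                ((dotv p.1 p.2 == dotv p'.1 p'.2)%:R : algC)).
  under eq_bigr => t _ do rewrite expr2 mulr_suml; rewrite exchange_big.
  apply: eq_bigr => p _; under eq_bigr => t _ do rewrite mulr_sumr.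
  rewrite exchange_big; apply: eq_bigr => p' _.
  rewrite (bigD1 (dotv p.1 p.2)) //= eqxx mul1r eq_sym big1 ?addr0 // => t.
  by move/negPf; rewrite eq_sym => ->; rewrite mul0r.
under eq_bigr => p _ do under eq_bigr => p' _ do rewrite (eq_psi_orth psi_char).
under eq_bigr => p _ do rewrite -mulr_sumr; rewrite -mulr_sumr; congr (_ * _).
under eq_bigr => p _ do rewrite exchange_big; rewrite exchange_big.
apply: eq_bigr => s _; rewrite normCK rmorph_sum mulr_suml.
by apply: eq_bigr => p _; rewrite -mulr_sumr.
Qed.

Lemma G0 : G 0 = e * f.
Proof. by rewrite -sum_EF1; apply: eq_bigr => p _; rewrite mul0r (psi0 psi_char). Qed.

Lemma norm_G_le s :
  `|G s| ^+ 2 <= e * (q ^+ (2 * d) * \sum_(x in E) `|fourier psi (ind F) (s *: x)| ^+ 2).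
Proof.
have -> : G s = \sum_(x in E) q ^+ d * (fourier psi (ind F) (s *: x))^*.
  rewrite /G -(pair_big [in E] [in F] (fun x y => psi (s * dotv x y))) /=.
  apply: eq_bigr => x _; rewrite (fourier_indE psi_char).
  by apply: eq_bigr => y _; rewrite dotvZl.
have normE (z : algC) : `|q ^+ d * z^*| ^+ 2 = q ^+ (2 * d) * `|z| ^+ 2.
  by rewrite normrM norm_conjC normrX ger0_norm ?ltW // exprMn -exprM mulnC.
apply: le_trans (normC_sum_sqr_le _ _) _.
by rewrite (eq_bigr _ (fun x _ => normE _)) -mulr_sumr.
Qed.

Hypothesis E0 : (0 : 'rV[K]_d) \notin E.

Lemma lineSumE : lineSum psi E F =
  \sum_(s | s != 0) \sum_(x in E) `|fourier psi (ind F) (s *: x)| ^+ 2.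
Proof.
rewrite /lineSum exchange_big /= [RHS](reindex_inj invr_inj) /=.
apply: eq_big => [s | s s_neq0]; first by rewrite invr_eq0.
rewrite (reindex_inj (scalerI (a := s^-1) _)) ?invr_eq0 //.
rewrite big_mkcond [RHS]big_mkcond /=; apply: eq_bigr => z _.
rewrite scalerA mulfV // scale1r /ind.
have [z_in_E | _] := boolP (z \in E); last by rewrite mul0r if_same.
have z_neq0 : z != 0 by apply: contraNneq E0 => <-.
by rewrite scaler_eq0 negb_or invr_eq0 s_neq0 z_neq0 mul1r.
Qed.

Lemma lineSum_ge0 : 0 <= lineSum psi E F.
Proof.
rewrite sumr_ge0 // => x _; rewrite sumr_ge0 // => s _.
by rewrite mulr_ge0 ?exprn_ge0 ?ler0n.
Qed.

Lemma energy_le :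
  \sum_t nu t ^+ 2 <= ((e * f) ^+ 2 + q ^+ (2 * d) * (e * lineSum psi E F)) / q.
Proof.
rewrite sum_nu_sqr (bigD1 0) //= G0 ger0_norm ?mulr_ge0 ?ler0n // mulrC.
apply: ler_wpM2r; first by rewrite invr_ge0 ltW.
rewrite lerD2l lineSumE mulrCA mulr_sumr mulr_sumr.
by apply: ler_sum => s _; apply: norm_G_le.
Qed.

Lemma card_Pi_ge :
  (e * f) ^+ 2 <=
    #|Pi E F|%:R * (((e * f) ^+ 2 + q ^+ (2 * d) * (e * lineSum psi E F)) / q).
Proof. by apply: le_trans card_Pi_energy _; rewrite ler_wpM2l ?ler0n ?energy_le. Qed.

End Energy.

Lemma le_mulD_cases (P x y z : algC) : 0 <= P -> 0 <= x -> 0 <= y ->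
  z <= P * (x + y) -> z <= 2 * (P * x) \/ z <= 2 * (P * y).
Proof.
move=> P_ge0 x_ge0 y_ge0 z_le.
have le_double u v : u <= v -> P * (u + v) <= 2 * (P * v).
  by move=> le_uv; rewrite mulr_natl mulr2n -mulrDr ler_wpM2l // lerD2r.
have /orP[le_xy | le_yx] := real_leVge (ger0_real x_ge0) (ger0_real y_ge0).
  by right; apply: le_trans z_le (le_double _ _ le_xy).
by left; apply: le_trans z_le _; rewrite addrC le_double.
Qed.

Lemma min_le_of_energy (q T e f S P : algC) :
  0 < q -> 0 < T -> 0 <= e -> 0 <= f -> 0 <= S -> 0 <= P ->
  (e * f) ^+ 2 <= P * ((e * f) ^+ 2 / q + T * (e * S)) ->
  (if (S == 0) && (e * f ^+ 2 != 0) then q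
   else Num.min q (e * f ^+ 2 / (T * S))) <= 2 * P.
Proof.
move=> q_gt0 T_gt0 e_ge0 f_ge0 S_ge0 P_ge0 energy.
have ge_min y : 0 <= y -> (Num.min q y <= 2 * P) = (q <= 2 * P) || (y <= 2 * P).
  by move=> y_ge0; rewrite comparable_ge_min // real_comparable // ger0_real // ltW.
have [-> | N_neq0] := eqVneq (e * f ^+ 2) 0.
  by rewrite andbF mul0r ge_min // mulr_ge0 ?ler0n ?orbT.
have [e_neq0 f_neq0] : e != 0 /\ f != 0.
  by split; apply: contraNneq N_neq0 => ->; rewrite ?mul0r ?expr0n ?mulr0.
have A_gt0 : 0 < (e * f) ^+ 2 by rewrite exprn_gt0 // lt_def mulf_neq0 ?mulr_ge0.
have y_ge0 : 0 <= e * f ^+ 2 / (T * S) by rewrite divr_ge0 ?mulr_ge0 ?exprn_ge0 // ltW.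
have [le_q | le_S] := le_mulD_cases P_ge0 (divr_ge0 (ltW A_gt0) (ltW q_gt0))
  (mulr_ge0 (ltW T_gt0) (mulr_ge0 e_ge0 S_ge0)) energy.
  have q_le : q <= 2 * P.
    by move: le_q; rewrite mulrA mulrCA ler_pMr // ler_pdivlMr // mul1r.
  by case: ifP => _; rewrite ?ge_min ?q_le.
have [S0 | S_neq0] := eqVneq S 0.
  by move: le_S; rewrite S0 !mulr0 => /(lt_le_trans A_gt0); rewrite ltxx.
have S_gt0 : 0 < S by rewrite lt_def S_neq0.
rewrite /= ge_min //; apply/orP; right.
have -> : e * f ^+ 2 / (T * S) = (e * f) ^+ 2 / (T * (e * S)).
  by field; rewrite e_neq0 S_neq0 gt_eqF.
by rewrite ler_pdivrMr -?mulrA // !mulr_gt0 // lt_def e_neq0.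
Qed.

Theorem lemma2p1 (d : nat) (hd : (2 <= d)%N) :
  exists c : algC, 0 < c < 1 /\
  forall (K : finFieldType) (psi : K -> algC),
    (forall p, p \in [pchar K] -> (2 < p)%N) ->
    is_nontriv_add_char psi ->
    forall E F : {set 'rV[K]_d}, (0 : 'rV[K]_d) \notin E ->
      let q : algC := #|K|%:R in
      let S : algC := lineSum psi E F in
      let N : algC := #|E|%:R * #|F|%:R ^+ 2 in
      c * (if (S == 0) && (N != 0) then q
           else Num.min q (N / (q ^+ (2 * d - 1) * S)))
        <= #|Pi E F|%:R.
Proof.
exists 2^-1; split; first by rewrite invr_gt0 ltr0n invf_lt1 ?ltr0n // ltr1n.
(* the bound holds in every characteristic *)
move=> K psi _ psi_char E F E0 /=.
have divE (a b : algC) :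
    (a + #|K|%:R ^+ (2 * d) * b) / #|K|%:R = a / #|K|%:R + #|K|%:R ^+ (2 * d - 1) * b.
  rewrite -[in LHS](subnK (_ : 1 <= 2 * d)%N) ?muln_gt0 ?(leq_trans _ hd) // addn1 exprSr.
  by field; rewrite gt_eqF ?natr_card_gt0.
rewrite ler_pdivrMl ?ltr0n //.
apply: min_le_of_energy; rewrite ?exprn_gt0 ?natr_card_gt0 ?ler0n ?lineSum_ge0 //.
by rewrite -divE; apply: card_Pi_ge.
Qed.
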